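(* Let $d$ and $p$ be integers with $d>p\ge 2$ and let \[ f_{d,p}(m)=\sum_{j=1}^{p}\binom{j+m-2}{j-1}\binom{d-j+m}{d-j}. \] If $d-2p+2\ge 0$, then the set of complex roots of $f_{d,p}$ is \[ \{-1,-2,\ldots,-(d-p),\alpha_1,\alpha_2,\ldots,\alpha_{p-1}\}, \] where $\alpha_1,\ldots,\alpha_{p-1}$ are real numbers with \[ -(p-1)<\alpha_{p-1}<-(p-2)<\alpha_{p-2}<-(p-3)<\cdots<-1<\alpha_1<0. \]
   Context: For an integer $a\ge 0$, $\binom{a+x}{a}$ denotes the polynomial $\prod_{i=1}^{a}(x+i)/a!$ in $x$; so $\binom{j+m-2}{j-1}=\prod_{i=0}^{j-2}(m+i)/(j-1)!$ and $\binom{d-j+m}{d-j}=\prod_{i=1}^{d-j}(m+i)/(d-j)!$. *)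

From mathcomp Require Import all_boot all_order all_algebra.
Set Implicit Arguments. Unset Strict Implicit. Unset Printing Implicit Defensive.
Import Order.TTheory GRing.Theory Num.Theory.
Local Open Scope ring_scope.

(* binom(j+m-2, j-1) as a polynomial in m: prod_{i=0}^{j-2} (m+i) / (j-1)! *)
Definition binA (C : fieldType) (j : nat) : {poly C} :=
  ((j.-1)`!%:R)^-1 *: \prod_(0 <= i < j.-1) ('X + (i%:R)%:P).

(* binom(d-j+m, d-j) as a polynomial in m: prod_{i=1}^{d-j} (m+i) / (d-j)! *)
Definition binB (C : fieldType) (d j : nat) : {poly C} :=
  (((d - j)%N)`!%:R)^-1 *: \prod_(1 <= i < (d - j).+1) ('X + (i%:R)%:P).

Definition fdp (C : fieldType) (d p : nat) : {poly C} :=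
  \sum_(1 <= j < p.+1) binA C j * binB C d j.

(* The factor prod_{k=1}^{d-p} (m+k), common to all binom(d-j+m, d-j) with
   j <= p, splits f_{d,p} = P * g with deg g <= p - 1 and g real.  Evaluating at
   m = -i, the j-th summand of g becomes, up to the positive factor 1/(d-p-i)!,
   (-1)^(j-1) binom(i, j-1) / (d-j)^_i, so g(-i) is an i-th finite difference of
   x |-> 1/x^_i, whose closed form has sign (-1)^i; the hypothesis d >= 2p - 2
   ensures that every 0 <= i <= p - 1 is covered, either by this computation
   (i <= d - p) or by the single surviving summand (i = d - p + 1 = p - 1).
   Hence g changes sign on each [-i, -(i-1)], has a real root there by the
   intermediate value theorem for real polynomials, and these p - 1 roots are
   all of its roots. *)

From mathcomp Require Import all_boot all_order all_algebra.
From mathcomp Require Import zify ring.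
Set Implicit Arguments. Unset Strict Implicit. Unset Printing Implicit Defensive.
Import Order.TTheory GRing.Theory Num.Theory.
Local Open Scope ring_scope.

Section RealPolyIVT.
Variable C : numClosedFieldType.
Implicit Types (g q : {poly C}) (a b c r : C).

Lemma conj_root g r : map_poly Num.conj g = g -> root g r -> root g r^*.
Proof. by move=> gJ /eqP gr; rewrite /root -gJ horner_map /= gr rmorph0. Qed.

Lemma conj_divp g q : map_poly Num.conj g = g -> map_poly Num.conj q = q ->
  map_poly Num.conj (g %/ q) = g %/ q.
Proof. by move=> gJ qJ; rewrite map_divp gJ qJ. Qed.

Lemma horner_XsubC_mul_gt0 r a b : a \is Num.real -> b \is Num.real ->
  r \is Num.real -> a < b -> ~~ (a <= r <= b) ->
  0 < ('X - r%:P).[a] * ('X - r%:P).[b].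
Proof.
move=> aR bR rR ab; rewrite !hornerXsubC.
have [ra|ar _] := real_leP aR rR; last first.
  by rewrite mulr_gt0 // subr_gt0 // (lt_trans ar).
have [rb|br _] := real_leP rR bR; first by move/negP.
by rewrite -mulrNN mulr_gt0 // oppr_gt0 subr_lt0 // (lt_trans ab br).
Qed.

Lemma horner_conj_pair_gt0 r c : r \isn't Num.real -> c \is Num.real ->
  0 < (('X - r^*%:P) * ('X - r%:P)).[c].
Proof.
move=> rNR cR; rewrite hornerM !hornerXsubC.
have -> : c - r^* = (c - r)^* by rewrite rmorphB /= (conj_Creal cR).
rewrite mulrC mul_conjC_gt0 subr_eq0.
by apply: contraNneq rNR => <-.
Qed.

Lemma real_root_or_factor g a b : map_poly Num.conj g = g -> (1 < size g)%N ->
  a \is Num.real -> b \is Num.real -> a < b -> g.[a] * g.[b] < 0 ->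
  (exists2 x, x \is Num.real & (a < x < b) && root g x) \/
  (exists2 q, map_poly Num.conj q = q & [/\ q %| g, (1 < size q)%N & 0 < q.[a] * q.[b]]).
Proof.
move=> gJ sg aR bR ab gab.
have [r rr] := closed_rootP g (negbT (gtn_eqF sg)).
have [rR|rNR] := boolP (r \is Num.real).
  have [/andP[ar rb]|r_out] := boolP (a <= r <= b).
    left; exists r => //; rewrite rr andbT !lt_neqAle ar rb !andbT.
    apply/andP; split.
      by apply: contraTneq gab => ->; rewrite (eqP rr) mul0r ltxx.
    by apply: contraTneq gab => <-; rewrite (eqP rr) mulr0 ltxx.
  right; exists ('X - r%:P); first by rewrite map_polyXsubC /= conj_Creal.
  by rewrite dvdp_XsubCl size_XsubC horner_XsubC_mul_gt0.
right; exists (('X - r^*%:P) * ('X - r%:P)).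
  by rewrite rmorphM /= !map_polyXsubC /= conjCK mulrC.
split.
- have [g1 g1r] : exists g1, g = g1 * ('X - r%:P).
    by exists (g %/ ('X - r%:P)); rewrite divpK // dvdp_XsubCl.
  have rJ : r^* != r by rewrite -CrealE.
  have := conj_root gJ rr; rewrite g1r rootM root_XsubC (negPf rJ) orbF.
  by rewrite dvdp_mul2r ?polyXsubC_eq0 // dvdp_XsubCl.
- by rewrite size_mul ?polyXsubC_eq0 // !size_XsubC.
- by rewrite mulr_gt0 // horner_conj_pair_gt0.
Qed.

Lemma real_poly_ivt g a b : map_poly Num.conj g = g ->
  a \is Num.real -> b \is Num.real -> a < b -> g.[a] * g.[b] < 0 ->
  exists2 x, x \is Num.real & (a < x < b) && root g x.
Proof.
move=> + aR bR ab.
elim: {g}(size g).+1 {-2}g (ltnSn (size g)) => // n IH g szg gJ gab.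
have [sg1|sg1] := leqP (size g) 1.
  move: gab; rewrite [g]size1_polyC // !hornerC.
  have cJ : (g`_0)^* = g`_0 by rewrite -coef_map gJ.
  by rewrite -{2}cJ => /lt_geF; rewrite mul_conjC_ge0.
have [//|[q qJ [qg sq qab]]] := real_root_or_factor gJ sg1 aR bR ab gab.
have q0 : q != 0 by rewrite -size_poly_gt0 (ltn_trans _ sq).
have ghq : g = (g %/ q) * q by rewrite divpK.
have [||x xR /andP[axb xr]] := IH (g %/ q) _ (conj_divp gJ qJ).
- rewrite size_divp // -ltnS (leq_trans _ szg) // ltnS ltn_subrL -subn1 subn_gt0 sq.
  exact: ltnW.
- by move: gab; rewrite [in X in X -> _]ghq !hornerM mulrACA pmulr_llt0.
by exists x => //; rewrite axb ghq rootM xr.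
Qed.
End RealPolyIVT.

Lemma natr_neq0 (R : numDomainType) n : (0 < n)%N -> n%:R != 0 :> R.
Proof. by rewrite pnatr_eq0 -lt0n. Qed.

Definition backward_diff (R : pzRingType) (u : nat -> R) (i x : nat) : R :=
  \sum_(k < i.+1) (-1) ^+ k * 'C(i, k)%:R * u (x - k)%N.

Lemma backward_diffS (R : comPzRingType) (u : nat -> R) i x : (0 < x)%N ->
  backward_diff u i.+1 x = backward_diff u i x - backward_diff u i x.-1.
Proof.
move=> x0; rewrite /backward_diff big_ord_recl [in RHS]big_ord_recl /=.
rewrite expr0 !bin0 !mul1r !subn0 -addrA; congr (_ + _).
rewrite (big_ord_widen i.+1 (fun k => (-1) ^+ bump 0 k * 'C(i, bump 0 k)%:R * u (x - bump 0 k)%N)) //.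
rewrite [in RHS]big_mkcond -sumrB; apply: eq_bigr => k _.
rewrite /bump /= add1n binS natrD exprS.
have -> : (x.-1 - k = x - k.+1)%N by lia.
by case: ltnP => [_|ik]; last rewrite bin_small ?ltnS // mulr0n; ring.
Qed.

Lemma backward_diff_inv_ffact (F : numFieldType) m i x : (m + i <= x)%N ->
  backward_diff (fun y => ((y ^_ m)%:R : F)^-1) i x =
  (-1) ^+ i * ((m + i).-1 ^_ i)%:R / (x ^_ (m + i))%:R.
Proof.
elim: i x => [|i IH] x hx.
  by rewrite /backward_diff big_ord1 expr0 bin0 !mul1r subn0 addn0.
rewrite backward_diffS; last lia.
rewrite !IH; try lia.
have Dx : (x ^_ (m + i.+1))%:R = (x ^_ (m + i))%:R * ((x%:R : F) - (m + i)%:R).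
  by rewrite addnS ffactnSr natrM natrB //; lia.
have Dx1 : (x.-1 ^_ (m + i))%:R = (x ^_ (m + i))%:R * ((x%:R : F) - (m + i)%:R) / x%:R.
  by rewrite -Dx addnS ffactnS natrM mulrC mulKf // natr_neq0; lia.
have -> : (m + i.+1).-1 = (m + i)%N by lia.
rewrite ffactnS natrM Dx Dx1 exprS.
field; rewrite -natrD -natrB ?natr_neq0 ?ffact_gt0 //; lia.
Qed.

Definition lin_prod (R : nzRingType) (a b : nat) : {poly R} :=
  \prod_(a <= i < b) ('X + i%:R%:P).

Lemma lin_prod_cat (R : nzRingType) a b c : (a <= b <= c)%N ->
  lin_prod R a c = lin_prod R a b * lin_prod R b c.
Proof. by case/andP=> ab bc; rewrite /lin_prod (@big_cat_nat _ _ _ b). Qed.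

Lemma lin_prodE (R : nzRingType) a b :
  lin_prod R a b = \prod_(a <= i < b) ('X - (- i%:R)%:P).
Proof. by apply: eq_bigr => i _; rewrite polyCN opprK. Qed.

Lemma size_lin_prod (R : nzRingType) a b : size (lin_prod R a b) = (b - a).+1.
Proof. by rewrite lin_prodE size_prod_XsubC size_iota. Qed.

Lemma root_lin_prodP (R : idomainType) a b z :
  reflect (exists2 k : nat, (a <= k < b)%N & z = - k%:R) (root (lin_prod R a b) z).
Proof.
rewrite lin_prodE /root horner_prod prodf_seq_eq0; apply: (iffP hasP).
  by move=> [k]; rewrite mem_index_iota /= hornerXsubC subr_eq0 => kr /eqP ->; exists k.
move=> [k kr ->]; exists k; first by rewrite mem_index_iota.
by rewrite /= hornerXsubC subrr.
Qed.

Lemma conj_lin_prod (C : numClosedFieldType) a b :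
  map_poly Num.conj (lin_prod C a b) = lin_prod C a b.
Proof.
rewrite lin_prodE rmorph_prod; apply: eq_bigr => i _.
by rewrite rmorphB /= map_polyX map_polyC /= rmorphN rmorph_nat.
Qed.

Lemma horner_lin_prod_nat (R : comNzRingType) a b i :
  (lin_prod R a b).[- i%:R] = \prod_(a <= t < b) (t%:R - i%:R).
Proof.
by rewrite /lin_prod horner_prod; apply: eq_bigr => t _; rewrite hornerD hornerX hornerC addrC.
Qed.

Lemma horner_lin_prod0 (R : comNzRingType) k i :
  (lin_prod R 0 k).[- i%:R] = (-1) ^+ k * (i ^_ k)%:R.
Proof.
rewrite horner_lin_prod_nat; elim: k => [|k IH]; first by rewrite big_geq // mul1r.
rewrite big_nat_recr //= IH ffactnSr natrM exprS.
have [ki|ik] := leqP k i; first by rewrite natrB //; ring.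
by rewrite ffact_small // !(mulr0, mul0r).
Qed.

Lemma horner_lin_prod_ge (R : comNzRingType) a b i : (i <= a)%N ->
  (lin_prod R a b).[- i%:R] = (\prod_(a <= t < b) (t - i))%:R.
Proof.
move=> ia; rewrite horner_lin_prod_nat natr_prod big_nat_cond [RHS]big_nat_cond.
by apply: eq_bigr => t /andP[/andP[ta _] _]; rewrite natrB // (leq_trans ia).
Qed.

Lemma fact_mul_prod_subn a b i : (i <= a)%N -> (a <= b)%N ->
  ((a - i)`! * \prod_(a.+1 <= t < b.+1) (t - i))%N = (b - i)`!.
Proof.
move=> ia; elim: b => [|b IH] ab.
  by move: ab; rewrite leqn0 => /eqP ->; rewrite big_geq // muln1.
have [ab'|ba] := leqP a b.
  by rewrite big_nat_recr //= mulnA IH // subSn ?(leq_trans ia) // factS mulnC.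
have -> : a = b.+1 by apply/eqP; rewrite eqn_leq ab ba.
by rewrite big_geq // muln1.
Qed.

Lemma binAE (F : fieldType) j : binA F j = ((j.-1)`!%:R)^-1 *: lin_prod F 0 j.-1.
Proof. by []. Qed.

Lemma horner_binA (F : numFieldType) j i :
  (binA F j).[- i%:R] = (-1) ^+ j.-1 * 'C(i, j.-1)%:R.
Proof.
rewrite binAE hornerZ horner_lin_prod0 -bin_ffact natrM.
by field; rewrite natr_neq0 ?fact_gt0.
Qed.

Lemma signr_mul_self (R : comPzRingType) n : (-1) ^+ n * (-1) ^+ n = 1 :> R.
Proof. by rewrite -exprMn mulrNN mulr1 expr1n. Qed.

Section Cofactor.
Variables (F : numFieldType) (d p : nat).

Definition fdp_cofactor : {poly F} :=
  \sum_(1 <= j < p.+1) binA F j * (((d - j)`!%:R)^-1 *: lin_prod F (d - p).+1 (d - j).+1).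

Lemma fdp_factor : fdp F d p = lin_prod F 1 (d - p).+1 * fdp_cofactor.
Proof.
rewrite /fdp /fdp_cofactor mulr_sumr big_nat_cond [RHS]big_nat_cond.
apply: eq_bigr => j /andP[/andP[j1 jp] _].
rewrite /binB -/(lin_prod F 1 (d - j).+1) (@lin_prod_cat _ _ (d - p).+1); last lia.
by rewrite scalerAr mulrCA.
Qed.

Lemma size_fdp_cofactor : (size fdp_cofactor <= p)%N.
Proof.
apply: (leq_trans (size_sum _ _ _)); apply/bigmax_leqP_seq => j.
rewrite mem_index_iota => jp _; apply: (leq_trans (size_polyMleq _ _)).
rewrite binAE !size_scale ?invr_neq0 ?natr_neq0 ?fact_gt0 // !size_lin_prod; lia.
Qed.

Lemma horner_cofactor_term j i : (p <= d)%N -> (i <= d - p)%N -> (1 <= j <= p)%N ->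
  (binA F j * (((d - j)`!%:R)^-1 *: lin_prod F (d - p).+1 (d - j).+1)).[- i%:R] =
  ((d - p - i)`!%:R)^-1 * ((-1) ^+ j.-1 * 'C(i, j.-1)%:R / ((d - j) ^_ i)%:R).
Proof.
move=> pd ip jp.
rewrite hornerM horner_binA hornerZ horner_lin_prod_ge; last lia.
have E : ((d - p - i)`! * \prod_((d - p).+1 <= t < (d - j).+1) (t - i))%N = (d - j - i)`!.
  by rewrite fact_mul_prod_subn //; lia.
have E' : ((d - j) ^_ i * (d - j - i)`!)%N = (d - j)`! by rewrite ffact_fact //; lia.
have P0 : (0 < \prod_((d - p).+1 <= t < (d - j).+1) (t - i))%N.
  by move: (fact_gt0 (d - j - i)); rewrite -E muln_gt0 => /andP[].
rewrite -E' -E !natrM.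
by field; rewrite !natr_neq0 ?fact_gt0 ?ffact_gt0 //; lia.
Qed.

Lemma horner_cofactor_low i : (p <= d)%N -> (i <= d - p)%N -> (i < p)%N ->
  fdp_cofactor.[- i%:R] =
  ((d - p - i)`!%:R)^-1 * backward_diff (fun y => ((y ^_ i)%:R : F)^-1) i d.-1.
Proof.
move=> pd ip ipp; rewrite /fdp_cofactor horner_sum big_nat_cond.
rewrite (eq_bigr (fun j => ((d - p - i)`!%:R)^-1 *
    ((-1) ^+ j.-1 * 'C(i, j.-1)%:R / ((d - j) ^_ i)%:R))); last first.
  by move=> j /andP[jp _]; rewrite horner_cofactor_term.
rewrite -big_nat_cond -mulr_sumr big_add1 /= (@big_cat_nat _ _ _ i.+1) //=.
rewrite [X in _ + X]big_nat_cond [X in _ + X]big1 ?addr0; last first.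
  by move=> k /andP[/andP[ik _] _]; rewrite bin_small // mulr0n mulr0 mul0r.
rewrite big_mkord; congr (_ * _); apply: eq_bigr => k _.
by rewrite (_ : d - k.+1 = d.-1 - k)%N //; lia.
Qed.

Lemma horner_cofactor_high : (0 < p <= d)%N ->
  fdp_cofactor.[- (d - p).+1%:R] =
  (-1) ^+ p.-1 * 'C((d - p).+1, p.-1)%:R / (d - p)`!%:R.
Proof.
case/andP=> p0 pd; rewrite /fdp_cofactor horner_sum big_nat_recr /=; last lia.
rewrite big_nat_cond big1 ?add0r; last first.
  move=> j /andP[/andP[j1 jp] _].
  rewrite hornerM [X in _ * X]hornerZ horner_lin_prod_ge // big_nat_recl /=; last lia.
  by rewrite subnn mul0n mulr0n !mulr0.
by rewrite hornerM horner_binA hornerZ /lin_prod big_geq // hornerC mulr1.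
Qed.

Lemma fdp_cofactor_sign i : (p < d)%N -> (2 * p <= d + 2)%N -> (i < p)%N ->
  0 < (-1) ^+ i * fdp_cofactor.[- i%:R].
Proof.
move=> pd hdp ip.
have [il|ih] := leqP i (d - p).
  rewrite horner_cofactor_low ?(ltnW pd) // backward_diff_inv_ffact; last lia.
  set s := (-1) ^+ i; rewrite (mulrCA s) !mulrA -(mulrA _ s s) signr_mul_self mulr1.
  by rewrite !mulr_gt0 ?invr_gt0 ?ltr0n ?fact_gt0 ?ffact_gt0 //; lia.
have [-> ep] : i = (d - p).+1 /\ p.-1 = (d - p).+1 by lia.
rewrite horner_cofactor_high; last lia.
by rewrite ep binn mulr1 mulrA signr_mul_self mul1r invr_gt0 ltr0n fact_gt0.
Qed.
End Cofactor.

Lemma root_mem_roots (R : idomainType) (g : {poly R}) (s : seq R) z :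
  g != 0 -> (size g <= (size s).+1)%N -> all (root g) s -> uniq s ->
  root g z -> z \in s.
Proof.
move=> g0 sg rs us gz; apply: contraT => zs.
have := @max_poly_roots _ g (z :: s) g0; rewrite /= gz rs zs us => /(_ isT isT).
by rewrite ltnNge sg.
Qed.

Lemma conj_fdp_cofactor (C : numClosedFieldType) d p :
  map_poly Num.conj (fdp_cofactor C d p) = fdp_cofactor C d p.
Proof.
rewrite rmorph_sum; apply: eq_bigr => j _.
by rewrite rmorphM /= binAE !map_polyZ !conj_lin_prod /= !fmorphV !rmorph_nat.
Qed.

Lemma fdp_cofactor_root_between (C : numClosedFieldType) d p i :
  (p < d)%N -> (2 * p <= d + 2)%N -> (1 <= i <= p - 1)%N ->
  exists2 x : C, x \is Num.real &
    (- i%:R < x < - i.-1%:R) && root (fdp_cofactor C d p) x.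
Proof.
move=> pd hdp; case: i => [//|k] ip.
apply: real_poly_ivt (conj_fdp_cofactor C d p) _ _ _ _.
- by rewrite realN realn.
- by rewrite realN realn.
- by rewrite ltrN2 ltr_nat.
have kp : (k.+1 < p)%N by lia.
have := mulr_gt0 (fdp_cofactor_sign C pd hdp kp) (fdp_cofactor_sign C pd hdp (ltnW kp)).
by rewrite exprS mulN1r !mulNr mulrACA signr_mul_self mul1r oppr_gt0.
Qed.

Lemma fdp_cofactor_separated_roots (C : numClosedFieldType) d p :
  (p < d)%N -> (2 * p <= d + 2)%N ->
  exists alpha : nat -> C, forall i, (1 <= i <= p - 1)%N ->
    [/\ alpha i \is Num.real, - i%:R < alpha i, alpha i < - i.-1%:R
      & root (fdp_cofactor C d p) (alpha i)].
Proof.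
move=> pd hdp.
have root_at i : exists x : C, (1 <= i <= p - 1)%N ==>
    [&& x \is Num.real, - i%:R < x, x < - i.-1%:R & root (fdp_cofactor C d p) x].
  have [ip|] := boolP (1 <= i <= p - 1)%N; last by exists 0.
  have [x xR /andP[/andP[lx xu] xr]] := fdp_cofactor_root_between C pd hdp ip.
  by exists x; rewrite xR lx xu xr.
exists (fun i => xchoose (root_at i)) => i ip.
by have /implyP/(_ ip)/and4P := xchooseP (root_at i).
Qed.

Lemma fdp_cofactor_roots (C : numClosedFieldType) d p :
  (0 < p < d)%N -> (2 * p <= d + 2)%N ->
  exists alpha : nat -> C,
    (forall i, (1 <= i <= p - 1)%N ->
       [/\ alpha i \is Num.real, - i%:R < alpha i & alpha i < - i.-1%:R]) /\
    (forall z, root (fdp_cofactor C d p) z <->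
       exists2 i, (1 <= i <= p - 1)%N & z = alpha i).
Proof.
case/andP=> p0 pd hdp; have [alpha alphaP] := fdp_cofactor_separated_roots C pd hdp.
have g0 : fdp_cofactor C d p != 0.
  by apply: contraTneq (fdp_cofactor_sign C pd hdp p0) => ->; rewrite horner0 mulr0 ltxx.
have alpha_lt i j : (1 <= i)%N -> (j <= p - 1)%N -> (i < j)%N -> alpha j < alpha i.
  move=> i1 jp ij; have [_ ai _ _] := alphaP i ltac:(lia).
  have [_ _ aj _] := alphaP j ltac:(lia).
  by rewrite (lt_trans aj) // (le_lt_trans _ ai) // lerN2 ler_nat; lia.
have alpha_uniq : uniq [seq alpha i | i <- iota 1 (p - 1)].
  rewrite map_inj_in_uniq ?iota_uniq // => i j; rewrite !mem_iota => ip jp eq_ij.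
  have [ij|ji|//] := ltngtP i j.
  - by have := alpha_lt i j ltac:(lia) ltac:(lia) ij; rewrite eq_ij ltxx.
  - by have := alpha_lt j i ltac:(lia) ltac:(lia) ji; rewrite eq_ij ltxx.
exists alpha; split => [i /alphaP[]//|z]; split => [gz|[i /alphaP[_ _ _ ai] ->]] //.
have /mapP[i] : z \in [seq alpha i | i <- iota 1 (p - 1)].
  apply: root_mem_roots g0 _ _ alpha_uniq gz.
  - by rewrite size_map size_iota (leq_trans (size_fdp_cofactor C d p)) //; lia.
  - apply/allP => y /mapP[i]; rewrite mem_iota => ip ->.
    by have [] := alphaP i ltac:(lia).
by rewrite mem_iota => ip ->; exists i => //; lia.
Qed.

Theorem theorem2p6 (C : numClosedFieldType) (d p : nat)
  (hp : (2 <= p)%N) (hpd : (p < d)%N) (h2 : (2 * p <= d + 2)%N) :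
  exists alpha : nat -> C,
    (forall i : nat, (1 <= i <= p - 1)%N ->
       [/\ alpha i \is Num.real, - (i%:R) < alpha i & alpha i < - ((i.-1)%:R)]) /\
    (forall z : C, root (fdp C d p) z <->
       (exists2 k : nat, (1 <= k <= d - p)%N & z = - (k%:R)) \/
       (exists2 i : nat, (1 <= i <= p - 1)%N & z = alpha i)).
Proof.
have p_range : (0 < p < d)%N by rewrite hpd andbT ltnW.
have [alpha [alpha_sep g_roots]] := fdp_cofactor_roots C p_range h2.
exists alpha; split => // z.
rewrite fdp_factor rootM -g_roots; split.
  by case/orP=> [/root_lin_prodP[k kr ->]|gz]; [left; exists k | right].
case=> [[k kr ->]|gz]; apply/orP; last by right.
by left; apply/root_lin_prodP; exists k.
Qed.
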